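(* Assume (A1) with $p\in(1,2]$, and that $\mathscr V^*=\mathscr V^*_1\cup\mathscr V^*_2$ with $\mathscr V^*_1,\mathscr V^*_2$ disjoint, compact, convex, with smooth boundaries. Let $\vartheta\ge\ell\operatorname{diam}(\mathscr V^* )^p-\underline f$. Then for every $v\in\mathbb R^d$: $$A(w,v)-A(V^*_1(v),v)\ge\|w-V^*_1(v)\|_2^2-2\Big(\frac{2^p\varkappa}{\ell^2}\Big)^{\frac1{p-1}}\quad\text{for all }w\in\mathcal Z_1,$$ $$A(w,v)-A(V^*_2(v),v)\ge\|w-V^*_2(v)\|_2^2-2\Big(\frac{2^p\varkappa}{\ell^2}\Big)^{\frac1{p-1}}\quad\text{for all }w\in\mathcal Z_2.$$
   Context: $f:\mathbb R^d\to\mathbb R$ continuous, $\underline f:=\inf f>-\infty$, $\mathscr V^*$ the set of global minimizers, $\operatorname{dist}(w,\mathscr V^* )$ Euclidean distance, $\operatorname{diam}(\mathscr V^* )=\sup_{v,w\in\mathscr V^*}\|v-w\|_2$. (A1): there are $\ell>0$, $p\in[1,2]$ with $f(w)-\underline f\ge\ell\operatorname{dist}(w,\mathscr V^* )^p$ for all $w$. $A(w,v):=\frac1\varkappa f(w)(f(v)+\vartheta)+\|v-w\|_2^2$ with $\varkappa>0$. $V^*_i(v):=\arg\min_{w\in\mathscr V^*_i}\|v-w\|_2$, $\mathcal Z_1:=\{v:\operatorname{dist}(v,\mathscr V^*_1)<\operatorname{dist}(v,\mathscr V^*_2)\}$, $\mathcal Z_2:=\{v:\operatorname{dist}(v,\mathscr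 V^*_2)<\operatorname{dist}(v,\mathscr V^*_1)\}$. *)

From HB Require Import structures.
From mathcomp Require Import all_boot all_order all_algebra.
From mathcomp Require Import all_classical all_reals all_analysis.
Set Implicit Arguments. Unset Strict Implicit. Unset Printing Implicit Defensive.
Import Order.TTheory GRing.Theory Num.Theory.
Import numFieldNormedType.Exports.
Local Open Scope classical_set_scope.
Local Open Scope ring_scope.

Section Defs.
Variables (R : realType) (d : nat).
Notation V := 'rV[R]_d.

Definition enorm (x : V) : R := Num.sqrt (\sum_(i < d) x ord0 i ^+ 2).

Definition dist_set (S : set V) (x : V) : R :=
  inf [set enorm (x - y) | y in S].

Definition diam (S : set V) : R :=
  sup [set enorm (y - z) | y in S & z in S].

Definition finf (f : V -> R) : R := inf (range f).

Definition minimizers (f : V -> R) : set V := [set w | f w = finf f].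

Definition convex_set_ (S : set V) : Prop :=
  forall x y, S x -> S y -> forall t : R, 0 <= t <= 1 ->
    S (t *: x + (1 - t) *: y).

Fixpoint Ck (n : nat) (g : V -> R) : Prop :=
  match n with
  | 0%N => continuous g
  | n'.+1 => (forall x, differentiable g x) /\
             forall v : V, Ck n' (fun x => 'D_v g x)
  end.

Definition smooth (g : V -> R) : Prop := forall n, Ck n g.

Definition smooth_boundary (S : set V) : Prop :=
  forall x, (closure S `\` interior S) x ->
    exists (U : set V) (g : V -> R),
      [/\ open U, U x, smooth g, (exists v : V, 'D_v g x != 0) &
          S `&` U = [set y | g y <= 0] `&` U].

Definition Afun (f : V -> R) (kappa theta : R) (w v : V) : R :=
  kappa^-1 * f w * (f v + theta) + enorm (v - w) ^+ 2.

End Defs.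

From HB Require Import structures.
From mathcomp Require Import all_boot all_order all_algebra.
From mathcomp Require Import all_classical all_reals all_analysis.
From mathcomp Require Import ring lra.
Set Implicit Arguments.
Unset Strict Implicit.
Unset Printing Implicit Defensive.
Import Order.TTheory GRing.Theory Num.Theory.
Import numFieldNormedType.Exports.
Local Open Scope classical_set_scope.
Local Open Scope ring_scope.

(* Let [u] be the projection of [v] on the convex component [V1], [a] the
   distance from [w] to [V1] and [b = |v - u|].  Expanding
   [|v - w|^2 = b^2 + |w - u|^2 + 2 <v - u, u - w>], the variational inequality
   of the projection bounds the cross term below by [- a b].  On the other
   side, the growth condition gives [f w - inf f >= l a^p] (on [Z1] the nearest
   minimizers lie in [V1]), and with [M] the set of minimizers the choice of
   [theta] gives [f v + theta >= l (dist(v, M)^p + diam(M)^p) >= 2^(1-p) l b^p].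
   Hence [A(w,v) - A(u,v) >= |w - u|^2 + 2 ((ab)^p / K - ab)] with
   [K = 2^p kappa / l^2], and [t^p / K - t >= - K^(1/(p-1))] for [t >= 0]. *)

Lemma quadratic_ge0_discr (R : realFieldType) (A B C : R) : 0 <= C ->
  (forall t, 0 <= A + 2 * t * B + t ^+ 2 * C) -> B ^+ 2 <= A * C.
Proof.
move=> C0; have [->|Cn0] := eqVneq C 0 => hq.
  have [->|Bn0] := eqVneq B 0; first by rewrite expr0n mulr0.
  have := hq (- (A + 1) / (2 * B)).
  have -> : A + 2 * (- (A + 1) / (2 * B)) * B + (- (A + 1) / (2 * B)) ^+ 2 * 0
    = -1 by field.
  by rewrite ler0N1.
have Cpos : 0 < C by rewrite lt0r Cn0.
have := hq (- B / C).
have -> : A + 2 * (- B / C) * B + (- B / C) ^+ 2 * C = A - B ^+ 2 / C.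
  by field.
by rewrite subr_ge0 ler_pdivrMr.
Qed.

Lemma powR_add_le (R : realType) (x y p : R) : 0 <= x -> 0 <= y -> 1 <= p ->
  2 * (x + y) `^ p <= 2 `^ p * (x `^ p + y `^ p).
Proof.
move=> x0 y0 p1.
have : (2^-1 * x + (1 - 2^-1) * y) `^ p <= 2^-1 * x `^ p + (1 - 2^-1) * y `^ p.
  by apply: (convex_powR p1 (Itv01 _ _)) => //=;
    rewrite ?inE/= ?in_itv/= ?andbT // ?invr_ge0 // invf_le1 ?ler1n.
have -> : (1 - 2^-1 : R) = 2^-1 by field.
rewrite -!mulrDr powRM ?invr_ge0 ?addr_ge0 // => h.
have g2p : 0 < 2 `^ p :> R by rewrite powR_gt0.
have := ler_wpM2l (ltW g2p) h.
rewrite mulrA -powRM ?invr_ge0 // mulfV // powR1 mul1r; lra.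
Qed.

Lemma le_powR_div_add (R : realType) (K p t : R) : 0 < K -> 1 < p -> 0 <= t ->
  t <= t `^ p / K + K `^ (p - 1)^-1.
Proof.
move=> K0 p1 t0; set T := K `^ (p - 1)^-1.
have tpK0 : 0 <= t `^ p / K by rewrite divr_ge0 ?powR_ge0 // ltW.
have [tT|Tt] := leP t T; first lra.
have p10 : 0 < p - 1 by rewrite subr_gt0.
have TK : T `^ (p - 1) = K by rewrite /T -powRrM mulVf ?gt_eqF // powRr1 // ltW.
have Ktp : K <= t `^ (p - 1).
  by rewrite -TK ge0_ler_powR ?nnegrE ?powR_ge0 // ltW.
have tp : t `^ p = t * t `^ (p - 1).
  rewrite -{2}(powRr1 t0) -powRD; first by rewrite addrC subrK.
  by rewrite addrC subrK gt_eqF // (lt_trans ltr01 p1).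
suff : t <= t `^ p / K by have : 0 <= T := powR_ge0 _ _; lra.
by rewrite ler_pdivlMr // tp ler_wpM2l.
Qed.

Section Euclidean.
Variables (R : realType) (d : nat).
Implicit Types (x y z u v w : 'rV[R]_d) (S : set 'rV[R]_d).

Definition dot x y : R := \sum_(i < d) x ord0 i * y ord0 i.

Lemma dotC x y : dot x y = dot y x.
Proof. by apply: eq_bigr => i _; rewrite mulrC. Qed.

Lemma dotDl x y z : dot (x + y) z = dot x z + dot y z.
Proof.
by rewrite /dot -big_split; apply: eq_bigr => i _; rewrite mxE mulrDl.
Qed.

Lemma dotZl a x y : dot (a *: x) y = a * dot x y.
Proof. by rewrite /dot mulr_sumr; apply: eq_bigr => i _; rewrite mxE mulrA. Qed.

Lemma dotNl x y : dot (- x) y = - dot x y.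
Proof. by rewrite -scaleN1r dotZl mulN1r. Qed.

Lemma dotDr x y z : dot x (y + z) = dot x y + dot x z.
Proof. by rewrite dotC dotDl !(dotC x). Qed.

Lemma dotZr a x y : dot x (a *: y) = a * dot x y.
Proof. by rewrite dotC dotZl dotC. Qed.

Lemma dotNr x y : dot x (- y) = - dot x y.
Proof. by rewrite dotC dotNl dotC. Qed.

Lemma enorm_sq x : enorm x ^+ 2 = dot x x.
Proof. by rewrite sqr_sqrtr //; apply: sumr_ge0 => i _; rewrite sqr_ge0. Qed.

Lemma enorm_ge0 x : 0 <= enorm x.
Proof. exact: sqrtr_ge0. Qed.

Lemma enorm0 : enorm (0 : 'rV[R]_d) = 0.
Proof. by rewrite /enorm big1 ?sqrtr0 // => i _; rewrite mxE expr0n. Qed.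

Lemma enormN x : enorm (- x) = enorm x.
Proof. by congr Num.sqrt; apply: eq_bigr => i _; rewrite mxE sqrrN. Qed.

Lemma enormB x y : enorm (x - y) = enorm (y - x).
Proof. by rewrite -enormN opprB. Qed.

Lemma enorm_sqD x y :
  enorm (x + y) ^+ 2 = enorm x ^+ 2 + 2 * dot x y + enorm y ^+ 2.
Proof. by rewrite !enorm_sq dotDl !dotDr (dotC y x); ring. Qed.

Lemma dot_le_enorm x y : dot x y <= enorm x * enorm y.
Proof.
have : dot x y ^+ 2 <= (enorm x * enorm y) ^+ 2.
  rewrite exprMn !enorm_sq; apply: quadratic_ge0_discr.
    by rewrite -enorm_sq sqr_ge0.
  move=> t; have := sqr_ge0 (enorm (x + t *: y)).
  by rewrite enorm_sqD dotZr !enorm_sq dotZl dotZr; congr (_ <= _); ring.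
have := mulr_ge0 (enorm_ge0 x) (enorm_ge0 y).
move: (enorm x * enorm y) (dot x y) => P b; nra.
Qed.

Lemma enormD x y : enorm (x + y) <= enorm x + enorm y.
Proof.
have h : enorm (x + y) ^+ 2 <= (enorm x + enorm y) ^+ 2.
  by rewrite enorm_sqD sqrrD; have := dot_le_enorm x y; lra.
by rewrite -(@ler_pXn2r _ 2) ?nnegrE ?addr_ge0 ?enorm_ge0.
Qed.

Lemma enorm_le_mx_norm x : enorm x <= d%:R * `|x|.
Proof.
have coord_le i : `|x ord0 i| <= `|x|.
  by rewrite [`|x|]mx_normrE (le_bigmax _ _ (ord0, i)).
rewrite -[leRHS]ger0_norm ?mulr_ge0 // -sqrtr_sqr ler_sqrt ?sqr_ge0 //.
apply: (@le_trans _ _ (\sum_(i < d) `|x| ^+ 2)).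
  apply: ler_sum => i _; rewrite -real_normK ?num_real //.
  by rewrite lerXn2r ?nnegrE ?normr_ge0.
rewrite sumr_const card_ord exprMn -[_ *+ d]mulr_natl ler_wpM2r ?sqr_ge0 //.
rewrite -natrX ler_nat; have [->//|d0] := posnP d.
by rewrite expnS expn1 leq_pmulr.
Qed.

Lemma dist_set_le S x y : S y -> dist_set S x <= enorm (x - y).
Proof.
move=> Sy; apply: ge_inf; last by exists y.
by exists 0 => _ [z _ <-]; exact: enorm_ge0.
Qed.

Lemma lb_le_dist_set S x y k :
  S y -> (forall z, S z -> k <= enorm (x - z)) -> k <= dist_set S x.
Proof.
move=> Sy hk; apply: lb_le_inf; first by exists (enorm (x - y)), y.
by move=> _ [z Sz <-]; exact: hk.
Qed.

Lemma dist_set_ge0 S x y : S y -> 0 <= dist_set S x.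
Proof. by move=> Sy; apply: (lb_le_dist_set Sy) => z _; exact: enorm_ge0. Qed.

Lemma compact_enorm_bounded S :
  compact S -> exists B, forall x, S x -> enorm x <= B.
Proof.
case/compact_bounded => B [_ HB]; exists (d%:R * (B + 1)) => x Sx.
rewrite (le_trans (enorm_le_mx_norm x)) // ler_wpM2l //.
by rewrite (HB (B + 1)) // ltrDl.
Qed.

Lemma enorm_le_diam S y z : compact S -> S y -> S z -> enorm (y - z) <= diam S.
Proof.
move=> /compact_enorm_bounded[B hB] Sy Sz.
apply: ub_le_sup; last by exists y => //; exists z.
exists (B + B) => _ [y' Sy' [z' Sz' <-]].
by rewrite (le_trans (enormD _ _)) // enormN lerD ?hB.
Qed.

Lemma proj_dot_ge0 S u v y : convex_set_ S -> S u ->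
  enorm (v - u) = dist_set S v -> S y -> 0 <= dot (v - u) (u - y).
Proof.
move=> cvxS Su proj_u Sy.
set g := dot (v - u) (u - y); set m := enorm (u - y) ^+ 2.
have step t : 0 < t <= 1 -> 0 <= 2 * g + t * m.
  case/andP=> t0 t1; have t01 : 0 <= t <= 1 by rewrite ltW.
  have := dist_set_le v (cvxS _ _ Sy Su t t01).
  have -> : v - (t *: y + (1 - t) *: u) = (v - u) + t *: (u - y).
    by apply/rowP => i; rewrite !mxE; ring.
  rewrite -proj_u => /(lerXn2r 2); rewrite !nnegrE !enorm_ge0 => /(_ isT isT).
  rewrite (enorm_sqD (v - u)) dotZr (enorm_sq (t *: _)) dotZl dotZr -enorm_sq.
  rewrite -/g -/m => h.
  by rewrite -(pmulr_rge0 _ t0); lra.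
rewrite leNgt; apply/negP => g_lt0.
have m0 : 0 <= m := sqr_ge0 _.
have mg0 : 0 < m - g by lra.
have t0 : 0 < - g / (m - g) by rewrite divr_gt0 // oppr_gt0.
have t1 : - g / (m - g) <= 1 by rewrite ler_pdivrMr // mul1r; lra.
have t01 : 0 < - g / (m - g) <= 1 by rewrite t0 t1.
have := step _ t01.
have : - g / (m - g) * m <= - g.
  by rewrite mulrAC ler_pdivrMr //; nra.
lra.
Qed.

Lemma proj_cross_ge S u v w : convex_set_ S -> S u ->
  enorm (v - u) = dist_set S v ->
  - (enorm (v - u) * dist_set S w) <= dot (v - u) (u - w).
Proof.
move=> cvxS Su proj_u.
set b := enorm (v - u); set G := dot (v - u) (u - w).
have Gy y : S y -> - (b * enorm (w - y)) <= G.
  move=> Sy; have := proj_dot_ge0 cvxS Su proj_u Sy.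
  have : dot (v - u) (w - y) <= b * enorm (w - y) := dot_le_enorm _ _.
  have -> : G = dot (v - u) (u - y) - dot (v - u) (w - y).
    by rewrite /G -dotNr -dotDr opprB addrA subrK.
  lra.
have [b0|bn0] := eqVneq b 0; first by have := Gy _ Su; rewrite b0 !mul0r.
have bpos : 0 < b by rewrite lt0r bn0 enorm_ge0.
have : - G / b <= dist_set S w.
  apply: (lb_le_dist_set Su) => y Sy.
  by rewrite ler_pdivrMr // mulrC lerNl; exact: Gy.
by rewrite ler_pdivrMr // mulrC lerNl.
Qed.

Lemma enorm_le_dist_add_diam S u v : compact S -> S u ->
  enorm (v - u) <= dist_set S v + diam S.
Proof.
move=> cS Su; rewrite -lerBlDr; apply: (lb_le_dist_set Su) => z Sz.
have := enorm_le_diam cS Sz Su; have := enormD (v - z) (z - u).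
by rewrite addrA subrK; lra.
Qed.

Lemma dist_set_setUl S T x y : S y -> dist_set S x <= dist_set T x ->
  dist_set S x <= dist_set (S `|` T) x.
Proof.
move=> Sy ST; apply: (lb_le_dist_set (or_introl Sy)) => z [Sz|Tz].
  exact: dist_set_le.
exact: le_trans ST (dist_set_le _ Tz).
Qed.

End Euclidean.

Section GrowthCondition.
Variables (R : realType) (d : nat) (f : 'rV[R]_d -> R) (ell p kappa theta : R).
Hypotheses (ell_gt0 : 0 < ell) (p1 : 1 < p) (kappa_gt0 : 0 < kappa).
Hypothesis growth :
  forall w, f w - finf f >= ell * dist_set (minimizers f) w `^ p.
Hypothesis compact_minimizers : compact (minimizers f).
Hypothesis theta_ge : theta >= ell * diam (minimizers f) `^ p - finf f.

Lemma powR_enorm_minimizer_le u v : minimizers f u ->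
  2 * ell * enorm (v - u) `^ p <= 2 `^ p * (f v + theta).
Proof.
move=> Mu; have hv := growth v; have hth := theta_ge.
set D := diam _ in hth; set Dv := dist_set _ v in hv.
have D0 : 0 <= D.
  by have := enorm_le_diam compact_minimizers Mu Mu; rewrite subrr enorm0.
have Dv0 : 0 <= Dv := dist_set_ge0 v Mu.
have p0 : 0 <= p by rewrite ltW // (lt_trans ltr01).
apply: (@le_trans _ _ (2 `^ p * (ell * (Dv `^ p + D `^ p)))); last first.
  by rewrite ler_wpM2l ?powR_ge0 //; lra.
rewrite -mulrA mulrCA [2 `^ p * _]mulrCA ler_pM2l //.
apply: le_trans (powR_add_le Dv0 D0 (ltW p1)); rewrite ler_pM2l //.
by rewrite ge0_ler_powR ?nnegrE ?enorm_ge0 ?addr_ge0 ?enorm_le_dist_add_diam.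
Qed.

Lemma Afun_sub_ge (V1 : set 'rV[R]_d) u v w :
  V1 `<=` minimizers f -> convex_set_ V1 -> V1 u ->
  enorm (v - u) = dist_set V1 v ->
  dist_set V1 w <= dist_set (minimizers f) w ->
  Afun f kappa theta w v - Afun f kappa theta u v >=
  enorm (w - u) ^+ 2 - 2 * ((2 `^ p * kappa / ell ^+ 2) `^ (p - 1)^-1).
Proof.
move=> V1M cvx V1u proj_u near_V1.
set a := dist_set V1 w; set b := enorm (v - u).
set K := 2 `^ p * kappa / ell ^+ 2; set S := f v + theta.
have a0 : 0 <= a := dist_set_ge0 w V1u.
have b0 : 0 <= b := enorm_ge0 _.
have g2p : 0 < 2 `^ p :> R by rewrite powR_gt0.
have K0 : 0 < K by rewrite divr_gt0 ?mulr_gt0 ?exprn_gt0.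
have fu : f u = finf f := V1M _ V1u.
have fw : ell * a `^ p <= f w - finf f.
  apply: le_trans (growth w); rewrite ler_pM2l // ge0_ler_powR ?nnegrE //.
    exact: ltW (lt_trans ltr01 p1).
  exact: le_trans near_V1.
have fv : 2 * ell * b `^ p <= 2 `^ p * S.
  exact: powR_enorm_minimizer_le (V1M _ V1u).
have cross : - (a * b) <= dot (v - u) (u - w).
  by rewrite mulrC; exact: proj_cross_ge.
have vw : enorm (v - w) ^+ 2
    = b ^+ 2 + 2 * dot (v - u) (u - w) + enorm (w - u) ^+ 2.
  by rewrite enormB -enorm_sqD addrA subrK.
have weight : 2 * (a * b) `^ p / K <= kappa^-1 * (f w - finf f) * S.
  have := ler_pM (mulr_ge0 (ltW ell_gt0) (powR_ge0 a p))
    (mulr_ge0 (mulr_ge0 (ler0n R 2) (ltW ell_gt0)) (powR_ge0 b p)) fw fv.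
  rewrite -(@ler_pM2l _ (kappa^-1 / 2 `^ p)) ?divr_gt0 ?invr_gt0 //.
  have -> : kappa^-1 / 2 `^ p * (ell * a `^ p * (2 * ell * b `^ p))
    = 2 * (a * b) `^ p / K.
    by rewrite powRM // /K; field; rewrite !gt_eqF ?exprn_gt0.
  have -> : kappa^-1 / 2 `^ p * ((f w - finf f) * (2 `^ p * S))
    = kappa^-1 * (f w - finf f) * S by field; rewrite !gt_eqF.
  done.
have -> : Afun f kappa theta w v - Afun f kappa theta u v
    = kappa^-1 * (f w - finf f) * S + enorm (v - w) ^+ 2 - b ^+ 2.
  by rewrite /Afun fu /S /b; ring.
have := le_powR_div_add K0 p1 (mulr_ge0 a0 b0).
rewrite vw; lra.
Qed.

End GrowthCondition.

Theorem mainTheorem11 (R : realType) (d : nat) (f : 'rV[R]_d -> R)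
  (ell p kappa theta : R) (V1 V2 : set 'rV[R]_d) :
  continuous f ->
  has_lbound (range f) ->
  0 < ell -> 1 < p <= 2 ->
  (forall w, f w - finf f >= ell * dist_set (minimizers f) w `^ p) ->
  minimizers f = V1 `|` V2 ->
  V1 `&` V2 = set0 ->
  compact V1 -> compact V2 ->
  convex_set_ V1 -> convex_set_ V2 ->
  smooth_boundary V1 -> smooth_boundary V2 ->
  0 < kappa ->
  theta >= ell * diam (minimizers f) `^ p - finf f ->
  forall v : 'rV[R]_d,
    (forall u1, V1 u1 -> enorm (v - u1) = dist_set V1 v ->
      forall w, dist_set V1 w < dist_set V2 w ->
        Afun f kappa theta w v - Afun f kappa theta u1 v >=
        enorm (w - u1) ^+ 2
        - 2 * ((2 `^ p * kappa / ell ^+ 2) `^ (p - 1)^-1)) /\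
    (forall u2, V2 u2 -> enorm (v - u2) = dist_set V2 v ->
      forall w, dist_set V2 w < dist_set V1 w ->
        Afun f kappa theta w v - Afun f kappa theta u2 v >=
        enorm (w - u2) ^+ 2
        - 2 * ((2 `^ p * kappa / ell ^+ 2) `^ (p - 1)^-1)).
Proof.
move=> _ _ ell0 /andP[p1 _] growth MU _ cV1 cV2 cvx1 cvx2 _ _ kappa0 theta_ge v.
have cM : compact (minimizers f) by rewrite MU; exact: compactU.
have Afun_ge := Afun_sub_ge ell0 p1 kappa0 growth cM theta_ge.
split=> [u1 V1u1 proj_u1 w Z1w | u2 V2u2 proj_u2 w Z2w].
  have V1M : V1 `<=` minimizers f by rewrite MU; left.
  have Z1w' : dist_set V1 w <= dist_set (minimizers f) w.
    by rewrite MU; exact: dist_set_setUl V1u1 (ltW Z1w).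
  exact: Afun_ge V1M cvx1 V1u1 proj_u1 Z1w'.
have V2M : V2 `<=` minimizers f by rewrite MU; right.
have Z2w' : dist_set V2 w <= dist_set (minimizers f) w.
  by rewrite MU setUC; exact: dist_set_setUl V2u2 (ltW Z2w).
exact: Afun_ge V2M cvx2 V2u2 proj_u2 Z2w'.
Qed.
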